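(* Let $K\ge1$, $T\ge1$, $\ell_1,\dots,\ell_T\in[0,1]^K$, $\phi>1$, $\alpha>0$. For FlipFlop with parameters $\phi,\alpha$, the cumulative mixability gap of the flop regime satisfies \[ \big(\underline{\Delta}_T\big)^2\le\underline{V}_T\ln K+\big(1+\tfrac23\ln K\big)\underline{\Delta}_T. \]
   Context: Hedge setting: $K$ experts; in round $t$ the learner chooses a probability vector $w_t$, then $\ell_t$ is revealed and the learner suffers $h_t=\sum_kw_{t,k}\ell_{t,k}$. Write $L_{t,k}=\sum_{s=1}^t\ell_{s,k}$ ($L_{0,k}=0$), $L^*_t=\min_kL_{t,k}$. Exponential weights with learning rate $\eta\in(0,\infty]$ at time $t$: $w_{t,k}=e^{-\eta L_{t-1,k}}/\sum_je^{-\eta L_{t-1,j}}$ if $\eta<\infty$; for $\eta=\infty$, $w_t$ uniform on $\{k:L_{t-1,k}=L^*_{t-1}\}$. With learning rate $\eta_t$ in round $t$: mix loss $m_t=-\frac1{\eta_t}\ln\sum_kw_{t,k}e^{-\eta_t\ell_{t,k}}$ if $\eta_t<\infty$, $m_t=L^*_t-L^*_{t-1}$ if $\eta_t=\infty$; mixability gap $\delta_t=h_t-m_t$; loss variance $v_t=\sum_kw_{t,k}(\ell_{t,k}-h_t)^2$. FlipFlop with parameters $\phi>1,\alpha>0$: keeps accumulators $\overline{\Delta}$ (flip) and $\underline{\Delta}$ (flop), both initially $0$, starting in the flip regime. In round $t$: flip regime uses $\eta_t=\infty$; flop regime uses $\eta_t=\ln K/\underline{\Delta}_{t-1}$ ($=\infty$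 if $\underline{\Delta}_{t-1}=0$); weights are exponential weights with learning rate $\eta_t$ from $L_{t-1}$. After round $t$, $\delta_t$ is added to the current regime's accumulator. If in flip and $\overline{\Delta}_t>(\phi/\alpha)\underline{\Delta}_t$, switch to flop for round $t+1$; if in flop and $\underline{\Delta}_t>\alpha\overline{\Delta}_t$, switch to flip for round $t+1$. $\underline{\Delta}_T$ is the sum of $\delta_t$ over flop rounds $t\le T$, and $\underline{V}_T$ is the sum of $v_t$ over flop rounds $t\le T$. *)

From HB Require Import structures.
From mathcomp Require Import all_boot all_order all_algebra.
From mathcomp Require Import boolp reals.
From mathcomp Require Import sequences exp.
Set Implicit Arguments. Unset Strict Implicit. Unset Printing Implicit Defensive.
Import Order.TTheory GRing.Theory Num.Theory.
Local Open Scope ring_scope.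

Section Hedge.
Variables (R : realType) (K : nat) (l : nat -> 'I_K -> R).
(* l t k = loss of expert k in round t (rounds are numbered 1, 2, ...) *)

Definition cumloss (t : nat) (k : 'I_K) : R := \sum_(1 <= s < t.+1) l s k.

(* L*_t = min_k L_{t,k}  (the default of the big min is an actual element, so
   it does not affect the value when K >= 1) *)
Definition Lmin (t : nat) : R :=
  \big[Num.min/(if [pick k : 'I_K] is Some k0 then cumloss t k0 else 0)]_(k : 'I_K)
     cumloss t k.

(* learning rates: [Some e] = finite eta = e, [None] = eta = +infinity *)
(* exponential weights used in round t (computed from L_{t-1}) *)
Definition ew_weight (eta : option R) (t : nat) (k : 'I_K) : R :=
  match eta with
  | Some e => expR (- e * cumloss t.-1 k) / \sum_(j : 'I_K) expR (- e * cumloss t.-1 j)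
  | None => (if cumloss t.-1 k == Lmin t.-1 then 1 else 0)
            / #|[set j : 'I_K | cumloss t.-1 j == Lmin t.-1]|%:R
  end.

Definition hedge_loss (eta : option R) (t : nat) : R :=
  \sum_(k : 'I_K) ew_weight eta t k * l t k.

Definition mix_loss (eta : option R) (t : nat) : R :=
  match eta with
  | Some e => - e^-1 * ln (\sum_(k : 'I_K) ew_weight eta t k * expR (- e * l t k))
  | None => Lmin t - Lmin t.-1
  end.

Definition mix_gap (eta : option R) (t : nat) : R := hedge_loss eta t - mix_loss eta t.

Definition loss_var (eta : option R) (t : nat) : R :=
  \sum_(k : 'I_K) ew_weight eta t k * (l t k - hedge_loss eta t) ^+ 2.

(* FlipFlop state after a round: current regime for the next round,
   flip accumulator, flop accumulator, and sum of v_t over flop rounds *)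
Record ff_state := FFState {
  ff_in_flip : bool;
  ff_dflip : R;
  ff_dflop : R;
  ff_vflop : R }.

Definition ff_init : ff_state := FFState true 0 0 0.

Variables (phi alpha : R).

Definition ff_eta (s : ff_state) : option R :=
  if ff_in_flip s then None
  else if ff_dflop s == 0 then None else Some (ln K%:R / ff_dflop s).

Definition ff_step (t : nat) (s : ff_state) : ff_state :=
  let eta := ff_eta s in
  let d := mix_gap eta t in
  if ff_in_flip s then
    let df := ff_dflip s + d in
    FFState (~~ (df > (phi / alpha) * ff_dflop s)) df (ff_dflop s) (ff_vflop s)
  else
    let dl := ff_dflop s + d in
    FFState (dl > alpha * ff_dflip s) (ff_dflip s) dl (ff_vflop s + loss_var eta t).

Fixpoint ff_run (t : nat) : ff_state :=
  match t with
  | 0 => ff_init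
  | t'.+1 => ff_step t'.+1 (ff_run t')
  end.

Definition flop_gap (T : nat) : R := ff_dflop (ff_run T).
Definition flop_var (T : nat) : R := ff_vflop (ff_run T).

End Hedge.

From HB Require Import structures.
From mathcomp Require Import all_boot all_order all_algebra.
From mathcomp Require Import boolp reals.
From mathcomp Require Import sequences exp.
From mathcomp Require Import topology normedtype derive.
From mathcomp Require Import ring lra zify.
Import Order.TTheory GRing.Theory Num.Theory numFieldNormedType.Exports.
Set Implicit Arguments.
Unset Strict Implicit.
Unset Printing Implicit Defensive.
Local Open Scope ring_scope.

(* In a flop round with finite learning rate [eta = ln K / D], where [D] is the
   flop gap accumulated so far, the mixability gap [d] lies in [0, 1] and
   satisfies the Bernstein-type bound [2 d <= eta v + 2/3 eta d], which comes
   from the [2/1] Padé upper bound on the exponential.  Multiplying by [D]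
   gives [2 D d <= v ln K + 2/3 d ln K]; with [d^2 <= d] this shows that
   [D^2 <= V ln K + (1 + 2/3 ln K) D] survives the update [D -> D + d],
   [V -> V + v].  When [D = 0] the rate is infinite and [d] in [0, 1]
   suffices, and flip rounds change neither [D] nor [V]. *)

Section ExpBound.
Variable R : realType.
Implicit Types (f df : R -> R) (a b x e : R).

Lemma is_derive_ndecr f df a b : (forall x, is_derive x 1 f (df x)) ->
  a <= b -> (forall c, a <= c <= b -> 0 <= df c) -> f a <= f b.
Proof.
move=> f'df ab df_ge0.
have [c cab E] := @MVT_segment R f df a b ab (fun x _ => f'df x)
  (derivable_within_continuous (fun x _ => @ex_derive _ _ _ _ _ _ _ (f'df x))).
by rewrite -subr_ge0 E mulr_ge0 ?subr_ge0 // df_ge0 // -itv_boundlr.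
Qed.

Lemma is_derive_nincr f df a b : (forall x, is_derive x 1 f (df x)) ->
  a <= b -> (forall c, a <= c <= b -> df c <= 0) -> f b <= f a.
Proof.
move=> f'df ab df_le0.
have [c cab E] := @MVT_segment R f df a b ab (fun x _ => f'df x)
  (derivable_within_continuous (fun x _ => @ex_derive _ _ _ _ _ _ _ (f'df x))).
by rewrite -subr_le0 E mulr_le0_ge0 ?subr_ge0 // df_le0 // -itv_boundlr.
Qed.

(* [(6 + 4 x + x^2) / (6 - 2 x)] is the [2/1] Padé approximant of [expR x];
   the defect below and its first two derivatives show that it dominates
   [expR x] for [x < 3]. *)
Let pade_defect x := 6 + 4 * x + x ^+ 2 - (6 - 2 * x) * expR x.
Let pade_defect1 x := 4 + 2 * x - (4 - 2 * x) * expR x.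
Let pade_defect2 x := 2 - (2 - 2 * x) * expR x.

Let is_derive_pade_defect x : is_derive x 1 pade_defect (pade_defect1 x).
Proof.
by rewrite /pade_defect /pade_defect1; apply: is_derive_eq; rewrite /GRing.scale /=; ring.
Qed.

Let is_derive_pade_defect1 x : is_derive x 1 pade_defect1 (pade_defect2 x).
Proof.
by rewrite /pade_defect1 /pade_defect2; apply: is_derive_eq; rewrite /GRing.scale /=; ring.
Qed.

Let pade_defect2_ge0 x : 0 <= pade_defect2 x.
Proof.
have : (1 - x) * expR x <= expR (- x) * expR x.
  by rewrite ler_pM2r ?expR_gt0 // expR_ge1Dx.
rewrite -expRD addNr expR0 /pade_defect2; lra.
Qed.

Let pade_defect1_0 : pade_defect1 0 = 0.
Proof. by rewrite /pade_defect1 expR0; ring. Qed.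

Let pade_defect1_ge0 x : 0 <= x -> 0 <= pade_defect1 x.
Proof.
move=> x_ge0; rewrite -pade_defect1_0.
by apply: is_derive_ndecr is_derive_pade_defect1 x_ge0 _ => c _; exact: pade_defect2_ge0.
Qed.

Let pade_defect1_le0 x : x <= 0 -> pade_defect1 x <= 0.
Proof.
move=> x_le0; rewrite -pade_defect1_0.
by apply: is_derive_ndecr is_derive_pade_defect1 x_le0 _ => c _; exact: pade_defect2_ge0.
Qed.

Let pade_defect_ge0 x : 0 <= pade_defect x.
Proof.
have -> : 0 = pade_defect 0 by rewrite /pade_defect expR0; ring.
have [x_ge0|x_lt0] := leP 0 x.
  apply: is_derive_ndecr is_derive_pade_defect _ _ => // c /andP[c_ge0 _].
  exact: pade_defect1_ge0.
apply: is_derive_nincr is_derive_pade_defect (ltW x_lt0) _ => c /andP[_ c_le0].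
exact: pade_defect1_le0.
Qed.

Lemma expR_le_pade x e : x <= e -> e < 3 ->
  expR x <= 1 + x + 3 * x ^+ 2 / (6 - 2 * e).
Proof.
move=> xe e_lt3.
have e6_gt0 : 0 < 6 - 2 * e by lra.
have x6_gt0 : 0 < 6 - 2 * x by lra.
have le_denom : 3 * x ^+ 2 / (6 - 2 * x) <= 3 * x ^+ 2 / (6 - 2 * e).
  have sq3_ge0 : 0 <= 3 * x ^+ 2 by rewrite mulr_ge0 // sqr_ge0.
  by rewrite ler_wpM2l // lef_pV2 ?posrE //; lra.
suff : expR x <= 1 + x + 3 * x ^+ 2 / (6 - 2 * x) by lra.
rewrite -(ler_pM2r x6_gt0) [X in _ <= X]mulrDl divfK ?gt_eqF //.
have := pade_defect_ge0 x; rewrite /pade_defect; nra.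
Qed.

End ExpBound.

Section WeightedLosses.
Variables (R : realType) (K : nat) (w x : 'I_K -> R).
Hypothesis w_ge0 : forall k, 0 <= w k.
Hypothesis w_sum1 : \sum_k w k = 1.
Hypothesis x_01 : forall k, 0 <= x k <= 1.

Definition wmean : R := \sum_k w k * x k.
Definition wvar : R := \sum_k w k * (x k - wmean) ^+ 2.
Definition wmix (e : R) : R := - e^-1 * ln (\sum_k w k * expR (- e * x k)).
Definition wmgf (e : R) : R := \sum_k w k * expR (e * (wmean - x k)).

Lemma wsum_centered (a b c : R) :
  \sum_k w k * (a + b * (wmean - x k) + c * (x k - wmean) ^+ 2) = a + c * wvar.
Proof.
rewrite (eq_bigr (fun k => a * w k + b * (wmean * w k - w k * x k)
                           + c * (w k * (x k - wmean) ^+ 2))); last by move=> k _; ring.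
rewrite !big_split /= -!mulr_sumr sumrB -mulr_sumr w_sum1 -/wmean -/wvar; ring.
Qed.

Lemma wmean_01 : 0 <= wmean <= 1.
Proof.
apply/andP; split; first by apply: sumr_ge0 => k _; rewrite mulr_ge0 // (andP (x_01 k)).1.
rewrite -w_sum1; apply: ler_sum => k _; apply: ler_piMr => //; exact: (andP (x_01 k)).2.
Qed.

Lemma wvar_ge0 : 0 <= wvar.
Proof. by apply: sumr_ge0 => k _; rewrite mulr_ge0 // sqr_ge0. Qed.

Lemma wmgf_ge1 e : 1 <= wmgf e.
Proof.
have <- : \sum_k w k * (1 + e * (wmean - x k) + 0 * (x k - wmean) ^+ 2) = 1.
  by rewrite wsum_centered mul0r addr0.
by apply: ler_sum => k _; rewrite mul0r addr0 ler_wpM2l // expR_ge1Dx.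
Qed.

Lemma wmgf_le e : 0 <= e < 3 -> wmgf e <= 1 + 3 * e ^+ 2 / (6 - 2 * e) * wvar.
Proof.
move=> /andP[e_ge0 e_lt3]; have /andP[_ mean_le1] := wmean_01.
rewrite -(wsum_centered 1 e); apply: ler_sum => k _; rewrite ler_wpM2l //.
have -> : 3 * e ^+ 2 / (6 - 2 * e) * (x k - wmean) ^+ 2 =
          3 * (e * (wmean - x k)) ^+ 2 / (6 - 2 * e) by field; lra.
apply: expR_le_pade e_lt3; have /andP[xk_ge0 _] := x_01 k; nra.
Qed.

Lemma wmix_gapE e : 0 < e -> wmean - wmix e = e^-1 * ln (wmgf e).
Proof.
move=> e_gt0.
have sumE : \sum_k w k * expR (- e * x k) = expR (- e * wmean) * wmgf e.
  rewrite /wmgf mulr_sumr; apply: eq_bigr => k _; rewrite mulrCA -expRD.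
  by congr (_ * expR _); ring.
rewrite /wmix sumE lnM ?posrE ?expR_gt0 ?(lt_le_trans ltr01 (wmgf_ge1 e)) // expRK.
by field; rewrite gt_eqF.
Qed.

Lemma wmix_gap_ge0 e : 0 < e -> 0 <= wmean - wmix e.
Proof.
move=> e_gt0; rewrite wmix_gapE // mulr_ge0 ?ln_ge0 ?wmgf_ge1 //.
by rewrite invr_ge0 ltW.
Qed.

Lemma wmix_gap_le1 e : 0 < e -> wmean - wmix e <= 1.
Proof.
move=> e_gt0; have /andP[_ mean_le1] := wmean_01.
suff : 0 <= wmix e by lra.
rewrite /wmix mulNr oppr_ge0; apply: mulr_ge0_le0; first by rewrite invr_ge0 ltW.
apply: ln_le0; rewrite -w_sum1.
apply: ler_sum => k _; rewrite ler_piMr // expR_le1 mulNr oppr_le0.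
by apply: mulr_ge0; [exact: ltW | case/andP: (x_01 k)].
Qed.

(* For [e < 3]: [e * gap = ln (wmgf e) <= wmgf e - 1], then the Padé bound
   termwise. *)
Lemma wmix_gap_bernstein e : 0 < e ->
  2 * (wmean - wmix e) <= e * wvar + 2 / 3 * e * (wmean - wmix e).
Proof.
move=> e_gt0; have gap_ge0 := wmix_gap_ge0 e_gt0; have var_ge0 := wvar_ge0.
have [e_ge3|e_lt3] := leP 3 e.
  have := mulr_ge0 (ltW e_gt0) var_ge0; nra.
have egap : e * (wmean - wmix e) <= 3 * e ^+ 2 / (6 - 2 * e) * wvar.
  rewrite wmix_gapE // mulrA divff ?gt_eqF // mul1r.
  have mgf_ge1 := wmgf_ge1 e.
  rewrite -[wmgf e](subrKC 1); apply: le_trans (le_ln1Dx _) _; first by lra.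
  by rewrite lerBlDl wmgf_le // (ltW e_gt0).
have : 3 * e ^+ 2 / (6 - 2 * e) * wvar * (6 - 2 * e) = 3 * e ^+ 2 * wvar.
  by field; lra.
nra.
Qed.

End WeightedLosses.

Section HedgeRound.
Variables (R : realType) (K : nat) (l : nat -> 'I_K -> R).
Hypothesis K_gt0 : (0 < K)%N.

Lemma cumlossS t k : cumloss l t.+1 k = cumloss l t k + l t.+1 k.
Proof. by rewrite /cumloss big_nat_recr. Qed.

Lemma Lmin_le t k : Lmin l t <= cumloss l t k.
Proof.
rewrite /Lmin; have : k \in index_enum 'I_K by rewrite mem_index_enum.
elim: (index_enum _) => [//|i r IH]; rewrite inE big_cons => /orP[/eqP<-|kr].
  by rewrite ge_min lexx.
by rewrite ge_min IH ?orbT.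
Qed.

Lemma Lmin_attained t : exists k, Lmin l t = cumloss l t k.
Proof.
rewrite /Lmin; apply: (big_ind (fun x => exists k, x = cumloss l t k)).
- by case: pickP => [k _|/(_ (Ordinal K_gt0))//]; exists k.
- by move=> _ _ [i ->] [j ->]; rewrite minEle; case: ifP; [exists i | exists j].
- by move=> i _; exists i.
Qed.

Lemma ew_weight_ge0 eta t k : 0 <= ew_weight l eta t k.
Proof.
case: eta => [e|] /=; last by rewrite divr_ge0 //; case: ifP.
by rewrite divr_ge0 ?expR_ge0 // sumr_ge0 // => i _; rewrite expR_ge0.
Qed.

Lemma ew_weight_sum1 eta t : \sum_k ew_weight l eta t k = 1.
Proof.
case: eta => [e|] /=; rewrite -mulr_suml.
  rewrite divff // gt_eqF // (bigD1 (Ordinal K_gt0)) //= ltr_pwDl ?expR_gt0 //.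
  by rewrite sumr_ge0 // => i _; rewrite expR_ge0.
set S := [set j | cumloss l t.-1 j == Lmin l t.-1].
have -> : \sum_k (if cumloss l t.-1 k == Lmin l t.-1 then 1 else 0) = \sum_(k in S) 1 :> R.
  by rewrite [RHS]big_mkcond; apply: eq_bigr => k _; rewrite inE.
rewrite sumr_const divff // pnatr_eq0 -lt0n.
have [k kE] := Lmin_attained t.-1.
by apply/card_gt0P; exists k; rewrite inE kE.
Qed.

Lemma loss_var_ge0 eta t : 0 <= loss_var l eta t.
Proof. exact: wvar_ge0 (ew_weight_ge0 eta t). Qed.

Lemma mix_gap_finite t e : 0 < e -> (forall k, 0 <= l t k <= 1) ->
  [/\ 0 <= mix_gap l (Some e) t, mix_gap l (Some e) t <= 1 &
       2 * mix_gap l (Some e) t <=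
         e * loss_var l (Some e) t + 2 / 3 * e * mix_gap l (Some e) t].
Proof.
move=> e_gt0 l_01; have w_ge0 := ew_weight_ge0 (Some e) t.
have w_sum1 := ew_weight_sum1 (Some e) t.
by split; [exact: wmix_gap_ge0 | exact: wmix_gap_le1 | exact: wmix_gap_bernstein].
Qed.

Lemma mix_gap_inftyE t : mix_gap l None t.+1 =
  \sum_k ew_weight l None t.+1 k * (l t.+1 k - (Lmin l t.+1 - Lmin l t)).
Proof.
by rewrite (eq_bigr _ (fun k _ => mulrBr _ _ _)) sumrB -mulr_suml ew_weight_sum1 mul1r.
Qed.

(* Only leaders at time [t] carry weight, and a leader's loss in round [t+1]
   is at least the increase of the leading cumulative loss. *)
Lemma mix_gap_infty_ge0 t : 0 <= mix_gap l None t.+1.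
Proof.
rewrite mix_gap_inftyE; apply: sumr_ge0 => k _.
have [leader|not_leader] := eqVneq (cumloss l t k) (Lmin l t).
  rewrite mulr_ge0 ?ew_weight_ge0 // subr_ge0.
  by rewrite lerBlDr addrC -leader -cumlossS Lmin_le.
by rewrite /ew_weight /= (negbTE not_leader) !mul0r.
Qed.

Lemma mix_gap_infty_le1 t : (forall k, 0 <= l t.+1 k <= 1) ->
  mix_gap l None t.+1 <= 1.
Proof.
move=> l_01; have /andP[_ hedge_le1] := wmean_01 (ew_weight_ge0 None t.+1)
  (ew_weight_sum1 None t.+1) l_01.
have [k kE] := Lmin_attained t.+1.
have := Lmin_le t k; have /andP[lk_ge0 _] := l_01 k.
rewrite /mix_gap /= kE cumlossS; move: hedge_le1; rewrite /wmean /hedge_loss; lra.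
Qed.

Lemma mix_gap_infty_single t : (K <= 1)%N -> mix_gap l None t.+1 = 0.
Proof.
move=> K_le1; rewrite mix_gap_inftyE; apply: big1 => k _.
have ordE (i j : 'I_K) : i = j.
  by apply/val_inj/eqP => /=; move: (ltn_ord i) (ltn_ord j); lia.
have [[i iE] [j jE]] := (Lmin_attained t.+1, Lmin_attained t).
by rewrite iE jE (ordE i k) (ordE j k) cumlossS addrAC subrr add0r subrr mulr0.
Qed.

End HedgeRound.

Lemma sqr_gap_bound_step (R : realType) (c D V d v : R) :
  D ^+ 2 <= V * c + (1 + 2 / 3 * c) * D -> 0 <= d <= 1 ->
  2 * D * d <= c * v + 2 / 3 * c * d ->
  (D + d) ^+ 2 <= (V + v) * c + (1 + 2 / 3 * c) * (D + d).
Proof. by move=> D_bound /andP[d_ge0 d_le1] Dd_bound; nra. Qed.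

Section FlipFlop.
Variables (R : realType) (K : nat) (l : nat -> 'I_K -> R) (phi alpha : R).
Hypothesis K_gt0 : (0 < K)%N.

Lemma ff_run_single_expert t : (K <= 1)%N -> ff_run l phi alpha t = ff_init R.
Proof.
move=> K_le1; elim: t => //= t ->.
by rewrite /ff_step /ff_eta /= mix_gap_infty_single // addr0 mulr0 ltxx.
Qed.

Definition flop_gap_bounded (c : R) (s : ff_state R) : Prop :=
  0 <= ff_dflop s /\
  ff_dflop s ^+ 2 <= ff_vflop s * c + (1 + 2 / 3 * c) * ff_dflop s.

Lemma flop_round_gap t (s : ff_state R) : (1 < K)%N -> ~~ ff_in_flip s ->
  0 <= ff_dflop s -> (forall k, 0 <= l t.+1 k <= 1) ->
  0 <= mix_gap l (ff_eta K s) t.+1 <= 1 /\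
  2 * ff_dflop s * mix_gap l (ff_eta K s) t.+1 <=
    ln K%:R * loss_var l (ff_eta K s) t.+1
    + 2 / 3 * ln K%:R * mix_gap l (ff_eta K s) t.+1.
Proof.
move=> K_gt1 /negbTE flop D_ge0 l_01.
have lnK_gt0 : 0 < ln (K%:R : R) by rewrite ln_gt0 // ltr1n.
rewrite /ff_eta flop; have [D0|D_neq0] := eqVneq (ff_dflop s) 0.
  have d_ge0 := mix_gap_infty_ge0 l K_gt0 t.
  have v_ge0 := loss_var_ge0 l None t.+1.
  split; first by rewrite d_ge0 mix_gap_infty_le1.
  by rewrite D0 mulr0 mul0r; nra.
set e := ln K%:R / ff_dflop s.
have D_gt0 : 0 < ff_dflop s by rewrite lt_def D_neq0.
have e_gt0 : 0 < e by rewrite divr_gt0.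
have [d_ge0 d_le1 bernstein] := mix_gap_finite K_gt0 e_gt0 l_01.
split; first by rewrite d_ge0.
have eD : e * ff_dflop s = ln K%:R by rewrite divfK ?gt_eqF.
rewrite -mulrA -eD; nra.
Qed.

Lemma ff_step_gap_bounded t s : (1 < K)%N -> (forall k, 0 <= l t.+1 k <= 1) ->
  flop_gap_bounded (ln K%:R) s ->
  flop_gap_bounded (ln K%:R) (ff_step l phi alpha t.+1 s).
Proof.
move=> K_gt1 l_01 [D_ge0 D_bound]; rewrite /ff_step.
case: ifPn => [_ //|flop]; rewrite /flop_gap_bounded /=.
have [d_01 Dd_bound] := flop_round_gap K_gt1 flop D_ge0 l_01.
have /andP[d_ge0 _] := d_01.
by split; [exact: addr_ge0 | exact: sqr_gap_bound_step].
Qed.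

Lemma ff_run_gap_bounded T t : (1 < K)%N ->
  (forall t k, (1 <= t <= T)%N -> 0 <= l t k <= 1) -> (t <= T)%N ->
  flop_gap_bounded (ln K%:R) (ff_run l phi alpha t).
Proof.
move=> K_gt1 l_01; elim: t => [_|t IH tT] /=.
  by split; rewrite /= ?expr0n //= mul0r mulr0 addr0.
by apply: ff_step_gap_bounded K_gt1 _ (IH (ltnW tT)) => k; rewrite l_01 ?tT.
Qed.

End FlipFlop.

Theorem lemma12 (R : realType) (K T : nat) (l : nat -> 'I_K -> R) (phi alpha : R) :
  (1 <= K)%N -> (1 <= T)%N ->
  (forall (t : nat) (k : 'I_K), (1 <= t <= T)%N -> 0 <= l t k <= 1) ->
  1 < phi -> 0 < alpha ->
  flop_gap l phi alpha T ^+ 2 <=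
    flop_var l phi alpha T * ln (K%:R : R)
    + (1 + 2 / 3 * ln (K%:R : R)) * flop_gap l phi alpha T.
Proof.
move=> K_gt0 _ l_01 _ _; rewrite /flop_gap /flop_var.
have [K_gt1|K_le1] := ltnP 1 K.
  by have [] := ff_run_gap_bounded phi alpha K_gt0 K_gt1 l_01 (leqnn T).
by rewrite ff_run_single_expert //= expr0n /= mul0r mulr0 addr0.
Qed.
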